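(* Let $K$ be a finite simplicial complex, $L$ a full subcomplex, $W$ the union of the simplices of $K$ not meeting $L$, $p$ a positive even integer, $T\in C^p(K,W;\mathbb Q)$ a cocycle, $K^*$ a subcomplex of $K$ and $L^*=K^*\cap L$. For a good ordering $\mathcal O$ of $K$ with respect to $L$, the chain map $\alpha\mapsto T\overset{\mathcal O}{\cap}\alpha$ induces a homomorphism $H_{p+q}(K,K^*;\mathbb Q)\to H_q(L,L^*;\mathbb Q)$. This homomorphism is independent of the choice of the good ordering $\mathcal O$.
   Context: A subcomplex $L$ of $K$ is full if every simplex of $K$ all of whose vertices lie in $L$ belongs to $L$. $C^p(K,W;\mathbb Q)$ consists of simplicial $p$-cochains vanishing on simplices contained in $W$. An ordering of $K$ is a partial order on the vertices whose restriction to the vertices of each simplex is a total order; it is good with respect to $L$ if whenever $v$ is a vertex of $L$ and $w\ge v$, then $w$ is a vertex of $L$. For $\alpha=[v_0,\dots,v_k]$ with $v_0<\dots<v_k$, $T\overset{\mathcal O}{\cap}\alpha=T([v_0,\dots,v_p])[v_p,\dots,v_k]$, extended linearly. *)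

From HB Require Import structures.
From mathcomp Require Import all_boot all_order all_algebra.
Set Implicit Arguments. Unset Strict Implicit. Unset Printing Implicit Defensive.
Import Order.TTheory GRing.Theory Num.Theory.
Local Open Scope ring_scope.

Section Simplicial.
Variable V : finType.

Definition is_complex (K : {set {set V}}) : Prop :=
  (forall s : {set V}, s \in K -> s != set0) /\
  (forall s t : {set V}, s \in K -> t \subset s -> t != set0 -> t \in K).

Definition is_subcomplex (L K : {set {set V}}) : Prop :=
  is_complex L /\ L \subset K.

Definition vert (K : {set {set V}}) : {set V} := [set v | [set v] \in K].

Definition is_full (L K : {set {set V}}) : Prop :=
  forall s, s \in K -> s \subset vert L -> s \in L.

Definition far_part (K L : {set {set V}}) : {set {set V}} :=
  [set s in K | [disjoint s & vert L]].

(* Chains and cochains: coefficient functions on simplices.  A chain c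
   stands for sum_s c(s) [s], where [s] is s oriented by the increasing
   order of enum_rank (a fixed reference total order on V). *)
Notation chain := {ffun {set V} -> rat}.

Definition cscale (a : rat) (c : chain) : chain := [ffun t => a * c t].

Definition std (s : {set V}) : seq V :=
  sort (fun x y => (enum_rank x <= enum_rank y)%N) (enum s).

Fixpoint inv (s : seq V) : nat :=
  match s with
  | [::] => 0%N
  | x :: s' => (count (fun y => (enum_rank y < enum_rank x)%N) s' + inv s')%N
  end.

Definition sgn (s : seq V) : rat := (-1) ^+ inv s.

Definition osimp (s : seq V) : chain :=
  if (s != [::]) && uniq s then [ffun t : {set V} => sgn s * (t == [set x in s])%:R]
  else 0.

Definition ceval (T : chain) (s : seq V) : rat :=
  if uniq s then sgn s * T [set x in s] else 0.

Definition delete (i : nat) (s : seq V) : seq V := take i s ++ drop i.+1 s.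

Definition bdry_seq (s : seq V) : chain :=
  \sum_(i < size s) cscale ((-1) ^+ i) (osimp (delete i s)).

Definition bdry (c : chain) : chain := \sum_(s : {set V}) cscale (c s) (bdry_seq (std s)).

Definition cobdry (T : chain) : chain :=
  [ffun s => \sum_(i < size (std s)) (-1) ^+ i * ceval T (delete i (std s))].

Definition chain_in (M : {set {set V}}) (n : nat) (c : chain) : Prop :=
  forall s, c s != 0 -> s \in M /\ #|s| = n.+1.

Definition rel_cochain (K W : {set {set V}}) (p : nat) (T : chain) : Prop :=
  forall s, T s != 0 -> [/\ s \in K, #|s| = p.+1 & s \notin W].

Definition cocycle (K : {set {set V}}) (T : chain) : Prop :=
  forall s, s \in K -> cobdry T s = 0.

Definition rel_cycle (M Ms : {set {set V}}) (n : nat) (c : chain) : Prop :=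
  chain_in M n c /\ chain_in Ms n.-1 (bdry c).

Definition rel_bdry (M Ms : {set {set V}}) (n : nat) (c : chain) : Prop :=
  exists d e, [/\ chain_in M n.+1 d, chain_in Ms n e & c = bdry d + e].

Definition is_ordering (K : {set {set V}}) (O : rel V) : Prop :=
  [/\ (forall v, v \in vert K -> O v v),
      (forall v w, v \in vert K -> w \in vert K -> O v w -> O w v -> v = w),
      (forall u v w, u \in vert K -> v \in vert K -> w \in vert K ->
          O u v -> O v w -> O u w)
    & (forall s, s \in K -> forall x y, x \in s -> y \in s -> O x y || O y x)].

Definition good_ordering (K L : {set {set V}}) (O : rel V) : Prop :=
  is_ordering K O /\
  (forall v w, v \in vert L -> w \in vert K -> O v w -> w \in vert L).

(* T cap^O c, extended linearly: for s with O-sorted vertices o = v_0<..<v_k,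
   [std s] = sgn o * [o], and T cap^O [o] = T([v_0..v_p]) [v_p..v_k]. *)
Definition capO (O : rel V) (p : nat) (T c : chain) : chain :=
  \sum_(s : {set V})
    cscale (c s * sgn (sort O (enum s)) * ceval T (take p.+1 (sort O (enum s))))
      (osimp (drop p (sort O (enum s)))).

End Simplicial.
Notation chain V := {ffun {set V} -> rat}.

(* Since [p] is even and [T] is a cocycle, the Leibniz rule reduces to
   [d (T cap s) = T cap (d s)]: the term [dT cap s] vanishes and the sign
   [(-1)^p] of the other term is [+1].  If [T cap^O s] is nonzero, the front
   face [v_0..v_p] of [s] meets [L], because [T] vanishes on simplices missing
   [L]; a good ordering then puts the whole back face [v_p..v_k] in [L].  So
   [T cap^O] is carried by [s |-> s :&: L], a simplex of [L] since [L] is full,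
   which gives the maps on relative homology.  For two good orderings the
   carrier is the same and is acyclic (a simplex is a cone), and in degree 0
   both maps send a [p]-simplex [s] to a 0-chain of augmentation [T(s)]; cones
   over a vertex of [s :&: L] then build, degree by degree, a chain homotopy
   between them. *)

From Pilot Require Import Defs.
From HB Require Import structures.
From mathcomp Require Import all_boot all_order all_algebra.
From mathcomp Require Import zify lra.
Set Implicit Arguments. Unset Strict Implicit. Unset Printing Implicit Defensive.
Import Order.TTheory GRing.Theory Num.Theory.
Local Open Scope ring_scope.

Section Signs.
Variable V : finType.
Implicit Types (x y : V) (s u : seq V) (A : {set V}).

Definition nbelow x s := count (fun y => (enum_rank y < enum_rank x)%N) s.

Definition nbelowS x A := #|[set y in A | (enum_rank y < enum_rank x)%N]|.

Fixpoint ncross s1 s2 : nat :=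
  if s1 is a :: s1' then (nbelow a s2 + ncross s1' s2)%N else 0%N.

Lemma signr_eq_odd (m n : nat) : odd m = odd n -> (-1) ^+ m = (-1) ^+ n :> rat.
Proof. by move=> h; rewrite -signr_odd h signr_odd. Qed.

Lemma signr_neq_odd (m n : nat) : odd m != odd n -> (-1) ^+ m = - (-1) ^+ n :> rat.
Proof. by rewrite -(signr_odd _ m) -(signr_odd _ n); case: (odd m); case: (odd n). Qed.

Lemma rank_ltNge x y : x != y ->
  (enum_rank y < enum_rank x)%N = ~~ (enum_rank x < enum_rank y)%N.
Proof.
by move=> xy; rewrite -leqNgt ltn_neqAle (inj_eq val_inj) (inj_eq enum_rank_inj) eq_sym xy.
Qed.

Lemma nbelow_cat x s1 s2 : nbelow x (s1 ++ s2) = (nbelow x s1 + nbelow x s2)%N.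
Proof. exact: count_cat. Qed.

Lemma inv_cons x s : Defs.inv (x :: s) = (nbelow x s + Defs.inv s)%N.
Proof. by []. Qed.

Lemma inv_cat s1 s2 : Defs.inv (s1 ++ s2) = (Defs.inv s1 + Defs.inv s2 + ncross s1 s2)%N.
Proof.
elim: s1 => [|a s1 IH]; first by rewrite /= addn0.
by rewrite cat_cons !inv_cons IH nbelow_cat [ncross (_ :: _) _]/=; lia.
Qed.

Lemma ncross_cons s1 x s2 :
  ncross s1 (x :: s2) = (ncross s1 s2 + count (fun a => (enum_rank x < enum_rank a)%N) s1)%N.
Proof. by elim: s1 => [|a s1 IH] //=; rewrite IH /nbelow /=; lia. Qed.

Lemma size_above_below x s : x \notin s ->
  size s = (count (fun a => (enum_rank x < enum_rank a)%N) s + nbelow x s)%N.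
Proof.
move=> xs; rewrite -(count_predC (fun a => (enum_rank x < enum_rank a)%N)); congr (_ + _)%N.
apply: eq_in_count => a as_ /=; apply/esym/rank_ltNge.
by apply: contraNneq xs => ->.
Qed.

Lemma odd_inv_insert s1 x s2 : x \notin s1 ->
  odd (Defs.inv (s1 ++ x :: s2) + size s1) =
  odd (Defs.inv (s1 ++ s2) + nbelow x (s1 ++ s2)).
Proof.
move=> xs1; rewrite !inv_cat /= ncross_cons (size_above_below xs1) /nbelow count_cat.
set g := count _ s1; rewrite -/(nbelow x s1) -/(nbelow x s2).
have -> : (Defs.inv s1 + (nbelow x s2 + Defs.inv s2) + (ncross s1 s2 + g) + (g + nbelow x s1))%N =
          (Defs.inv s1 + Defs.inv s2 + ncross s1 s2 + (nbelow x s1 + nbelow x s2) + g.*2)%N.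
  by rewrite -addnn; lia.
by rewrite oddD odd_double addbF.
Qed.

Lemma nbelow_set x u : uniq u -> nbelow x u = nbelowS x [set y in u].
Proof.
move=> uu; rewrite /nbelow /nbelowS -size_filter -(card_uniqP (filter_uniq _ uu)).
by apply: eq_card => y; rewrite !inE mem_filter andbC.
Qed.

Lemma delete_subseq i u : subseq (delete i u) u.
Proof.
rewrite /delete -{3}(cat_take_drop i u) cat_subseq //.
by rewrite -add1n -drop_drop drop_subseq.
Qed.

Lemma delete_uniq i u : uniq u -> uniq (delete i u).
Proof. exact: subseq_uniq (delete_subseq i u). Qed.

Lemma delete_nth x0 i u : (i < size u)%N -> u = take i u ++ nth x0 u i :: drop i.+1 u.
Proof. by move=> hi; rewrite -(drop_nth x0 hi) cat_take_drop. Qed.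

Lemma set_delete x0 i u : uniq u -> (i < size u)%N ->
  [set y in delete i u] = [set y in u] :\ nth x0 u i.
Proof.
move=> uu /(delete_nth x0) Hu; move: (uu); rewrite {1}Hu.
rewrite cat_uniq /= negb_or => /and3P[_ /andP[H1 _] /andP[H2 _]].
apply/setP => y; rewrite !inE.
have -> : (y \in u) = (y \in take i u ++ nth x0 u i :: drop i.+1 u) by rewrite -Hu.
rewrite /delete !mem_cat inE.
by case: (eqVneq y (nth x0 u i)) => [->|]; rewrite /= ?(negbTE H1) ?(negbTE H2).
Qed.

Lemma sgn_delete x0 i u : uniq u -> (i < size u)%N ->
  (-1) ^+ i * sgn (delete i u) = sgn u * (-1) ^+ nbelowS (nth x0 u i) [set y in u].
Proof.
move=> uu hi; set x := nth x0 u i.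
have Hu := delete_nth x0 hi.
have xt : x \notin take i u.
  by move: uu; rewrite {1}Hu cat_uniq /= negb_or => /and3P[_ /andP[]].
have sz : size (take i u) = i by rewrite size_take hi.
have Hc : nbelow x (delete i u) = nbelow x u.
  by rewrite [in RHS]Hu /delete /nbelow !count_cat /= ltnn.
have := odd_inv_insert (drop i.+1 u) xt; rewrite -Hu sz -/(delete i u) Hc (nbelow_set _ uu).
rewrite /sgn -!exprD => Hodd; apply: signr_eq_odd; move: Hodd; rewrite !oddD.
by case: (odd i); case: (odd (Defs.inv u)); case: (odd (Defs.inv _)); case: (odd (nbelowS _ _)).
Qed.

Lemma sum_nth_set (M : nmodType) x0 u (G : V -> M) : uniq u ->
  \sum_(i < size u) G (nth x0 u i) = \sum_(x in [set y in u]) G x.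
Proof.
move=> uu; rewrite -(big_mkord xpredT (fun i => G (nth x0 u i))) -(big_nth x0 xpredT G).
by rewrite big_uniq //; apply: eq_bigl => y; rewrite inE.
Qed.

Lemma sum_delete (phi : {set V} -> rat) u : uniq u ->
  \sum_(i < size u) (-1) ^+ i * (sgn (delete i u) * phi [set y in delete i u]) =
  sgn u * \sum_(x in [set y in u]) (-1) ^+ nbelowS x [set y in u] * phi ([set y in u] :\ x).
Proof.
case: u => [|x0 u'] uu; first by rewrite big_ord0 big_pred0 ?mulr0 // => y; rewrite inE.
rewrite mulr_sumr -(sum_nth_set x0 (fun x => sgn _ * (_ * phi (_ :\ x)))) //.
apply: eq_bigr => i _.
by rewrite [LHS]mulrA (sgn_delete x0 uu (ltn_ord i)) (set_delete x0 uu (ltn_ord i)) mulrA.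
Qed.

End Signs.

Section Chains.
Variable V : finType.
Implicit Types (u : seq V) (A S t : {set V}) (c d : chain V) (F G : {set V} -> chain V).

Definition simplex A : chain V := [ffun t => (t == A)%:R].

Definition nsimplex A : chain V := if A != set0 then simplex A else 0.

Definition linext F c : chain V := \sum_S cscale (c S) (F S).

Definition bd A : chain V := \sum_(x in A) cscale ((-1) ^+ nbelowS x A) (nsimplex (A :\ x)).

Definition cobd (T : chain V) A : rat := \sum_(x in A) (-1) ^+ nbelowS x A * T (A :\ x).

Definition supp (P : {set V} -> Prop) c := forall t, c t != 0 -> P t.

Lemma cscaleE a c t : cscale a c t = a * c t.
Proof. by rewrite ffunE. Qed.

Lemma cscale_is_zmod_morphism a : zmod_morphism (cscale a : chain V -> chain V).
Proof. by move=> c d; apply/ffunP => t; rewrite !(ffunE, cscaleE) mulrBr. Qed.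

HB.instance Definition _ a := GRing.isZmodMorphism.Build (chain V) (chain V) (cscale a)
  (cscale_is_zmod_morphism a).

Lemma cscaleA a b c : cscale a (cscale b c) = cscale (a * b) c.
Proof. by apply/ffunP => t; rewrite !cscaleE mulrA. Qed.

Lemma cscale0r c : cscale 0 c = 0.
Proof. by apply/ffunP => t; rewrite cscaleE ffunE mul0r. Qed.

Lemma cscale1r c : cscale 1 c = c.
Proof. by apply/ffunP => t; rewrite cscaleE mul1r. Qed.

Lemma linextE F c t : linext F c t = \sum_S c S * F S t.
Proof. by rewrite sum_ffunE; apply: eq_bigr => S _; rewrite cscaleE. Qed.

Lemma linext_is_zmod_morphism F : zmod_morphism (linext F).
Proof.
move=> c d; apply/ffunP => t; rewrite !(ffunE, linextE) -sumrB.
by apply: eq_bigr => S _; rewrite !ffunE mulrBl.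
Qed.

HB.instance Definition _ F := GRing.isZmodMorphism.Build (chain V) (chain V) (linext F)
  (linext_is_zmod_morphism F).

Lemma linext_cscale F a c : linext F (cscale a c) = cscale a (linext F c).
Proof.
apply/ffunP => t; rewrite cscaleE !linextE mulr_sumr.
by apply: eq_bigr => S _; rewrite cscaleE mulrA.
Qed.

Lemma sum_simplex A : \sum_t simplex A t = 1.
Proof.
rewrite (bigD1 A) //= big1 ?addr0 => [|t /negbTE tA]; first by rewrite ffunE eqxx.
by rewrite ffunE tA.
Qed.

Lemma linext_simplex F A : linext F (simplex A) = F A.
Proof.
apply/ffunP => t; rewrite linextE (bigD1 A) //= big1 ?addr0 => [|S /negbTE SA].
  by rewrite ffunE eqxx mul1r.
by rewrite ffunE SA mul0r.
Qed.

Lemma linext_nsimplex F A : linext F (nsimplex A) = if A != set0 then F A else 0.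
Proof. by rewrite /nsimplex; case: ifP; rewrite ?linext_simplex ?raddf0. Qed.

Lemma linext_eq_in F G c : (forall S, c S != 0 -> F S = G S) -> linext F c = linext G c.
Proof.
move=> FG; apply: eq_bigr => S _; case: (eqVneq (c S) 0) => [->|/FG -> //].
by rewrite !cscale0r.
Qed.

Lemma linext_comp F G c : linext F (linext G c) = linext (fun S => linext F (G S)) c.
Proof.
apply/ffunP => t; rewrite !linextE.
under eq_bigr do rewrite linextE mulr_suml.
rewrite exchange_big; apply: eq_bigr => S _.
by rewrite linextE mulr_sumr; apply: eq_bigr => S' _; rewrite mulrA.
Qed.

Lemma linext_simplexE F c : linext F c = linext (fun S => linext F (simplex S)) c.
Proof. by apply: linext_eq_in => S _; rewrite linext_simplex. Qed.

Lemma linext_id c : linext simplex c = c.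
Proof.
apply/ffunP => t; rewrite linextE (bigD1 t) //= big1 ?addr0 => [|S St].
  by rewrite ffunE eqxx mulr1.
by rewrite ffunE eq_sym (negbTE St) mulr0.
Qed.

Lemma linext_const d c : linext (fun=> d) c = cscale (\sum_S c S) d.
Proof. by apply/ffunP => t; rewrite linextE cscaleE mulr_suml. Qed.

Lemma linext_funD F G c : linext (fun S => F S + G S) c = linext F c + linext G c.
Proof.
apply/ffunP => t; rewrite !(ffunE, linextE) -big_split.
by apply: eq_bigr => S _; rewrite ffunE mulrDr.
Qed.

Lemma linext_funB F G c : linext (fun S => F S - G S) c = linext F c - linext G c.
Proof.
apply/ffunP => t; rewrite !(ffunE, linextE) -sumrB.
by apply: eq_bigr => S _; rewrite !ffunE mulrBr.
Qed.

Lemma supp_linext P F c : (forall S, c S != 0 -> supp P (F S)) -> supp P (linext F c).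
Proof.
move=> H t; rewrite linextE; case: (pickP (fun S => c S * F S t != 0)) => [S /=|H0].
  by rewrite mulf_eq0 negb_or => /andP[/H /[apply]].
by rewrite big1 ?eqxx // => S _; apply/eqP/negbFE/H0.
Qed.

Lemma supp0 P : supp P 0.
Proof. by move=> t; rewrite ffunE eqxx. Qed.

Lemma supp_add P c d : supp P c -> supp P d -> supp P (c + d).
Proof.
move=> hc hd t; rewrite ffunE; case: (eqVneq (c t) 0) => [->|/hc //].
by rewrite add0r => /hd.
Qed.

Lemma supp_sub P c d : supp P c -> supp P d -> supp P (c - d).
Proof. by move=> hc hd; apply: supp_add => // t; rewrite ffunE oppr_eq0 => /hd. Qed.

Lemma supp_sum P (I : Type) (r : seq I) (Q : pred I) (G : I -> chain V) :
  (forall i, Q i -> supp P (G i)) -> supp P (\sum_(i <- r | Q i) G i).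
Proof.
move=> H; elim/big_rec: _ => [|i x Qi hx]; first exact: supp0.
by apply: supp_add => //; apply: H.
Qed.

Lemma supp_cscale P a c : supp P c -> supp P (cscale a c).
Proof. by move=> hc t; rewrite cscaleE mulf_eq0 negb_or => /andP[_ /hc]. Qed.

Lemma supp_simplex (P : {set V} -> Prop) A : P A -> supp P (simplex A).
Proof. by move=> hA t; rewrite ffunE; case: (eqVneq t A) => [->|]; rewrite ?eqxx. Qed.

Lemma supp_nsimplex (P : {set V} -> Prop) A : (A != set0 -> P A) -> supp P (nsimplex A).
Proof.
by rewrite /nsimplex; case: ifP => [_ /(_ isT)|_ _]; [apply: supp_simplex|apply: supp0].
Qed.

Lemma supp_impl (P Q : {set V} -> Prop) c : (forall t, P t -> Q t) -> supp P c -> supp Q c.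
Proof. by move=> H hc t /hc /H. Qed.

Lemma supp_eq0 (P : {set V} -> Prop) c : (forall t, ~ P t) -> supp P c -> c = 0.
Proof.
move=> H hc; apply/ffunP => t; rewrite ffunE; apply/eqP; apply: contraT => /hc.
by move/H.
Qed.

End Chains.

Section Boundary.
Variable V : finType.
Implicit Types (x y w : V) (u : seq V) (A S t : {set V}) (c d : chain V).

Lemma set_seq_nil : [set y in ([::] : seq V)] = set0.
Proof. by apply/setP => y; rewrite !inE. Qed.

Lemma set_seq_cons_neq0 x u : [set y in x :: u] != set0.
Proof. by apply/set0Pn; exists x; rewrite inE mem_head. Qed.

Lemma set1_neq0 x : [set x] != set0.
Proof. by apply/set0Pn; exists x; rewrite set11. Qed.

Lemma setD1_neq0 x A : x \in A -> (1 < #|A|)%N -> A :\ x != set0.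
Proof. by move=> xA; rewrite (cardsD1 x) xA ltnS card_gt0. Qed.

Lemma osimpE u : uniq u -> osimp u = cscale (sgn u) (nsimplex [set y in u]).
Proof.
move=> uu; apply/ffunP => t; rewrite /osimp /nsimplex uu andbT cscaleE.
case: u uu => [|x u] _ /=; first by rewrite set_seq_nil eqxx !ffunE mulr0.
by rewrite set_seq_cons_neq0 !ffunE.
Qed.

Lemma cevalE (T : chain V) u : uniq u -> ceval T u = sgn u * T [set y in u].
Proof. by rewrite /ceval => ->. Qed.

Lemma bdry_seqE u : uniq u -> bdry_seq u = cscale (sgn u) (bd [set y in u]).
Proof.
move=> uu; apply/ffunP => t; rewrite cscaleE !sum_ffunE.
under [in RHS]eq_bigr do rewrite cscaleE.
rewrite -(sum_delete (fun A => nsimplex A t) uu); apply: eq_bigr => i _.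
by rewrite cscaleE (osimpE (delete_uniq i uu)) cscaleE.
Qed.

Lemma cobdry_seqE (T : chain V) u : uniq u ->
  \sum_(i < size u) (-1) ^+ i * ceval T (delete i u) = sgn u * cobd T [set y in u].
Proof.
move=> uu; rewrite -(sum_delete T uu); apply: eq_bigr => i _.
by rewrite (cevalE _ (delete_uniq i uu)).
Qed.

Lemma std_uniq A : uniq (std A).
Proof. by rewrite sort_uniq enum_uniq. Qed.

Lemma std_set A : [set y in std A] = A.
Proof. by apply/setP => y; rewrite inE mem_sort mem_enum. Qed.

Lemma sgn_std A : sgn (std A) = 1.
Proof.
rewrite /sgn; suff -> : Defs.inv (std A) = 0%N by [].
have : sorted (fun x y => (enum_rank x <= enum_rank y)%N) (std A).
  by apply: sort_sorted => x y; apply: leq_total.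
elim: (std A) => [|a s IH] //= Hs; rewrite IH ?(path_sorted Hs) // addn0.
have Ha : all (fun y => (enum_rank a <= enum_rank y)%N) s.
  by apply: order_path_min Hs => x y z; apply: leq_trans.
apply/eqP; rewrite -leqn0 leqNgt -has_count; apply/hasPn => y ys.
by rewrite -leqNgt; apply: (allP Ha).
Qed.

Lemma bdry_linext c : bdry c = linext (@bd V) c.
Proof.
apply: eq_bigr => S _.
by rewrite (bdry_seqE (std_uniq S)) sgn_std std_set cscale1r.
Qed.

Lemma bdry_is_zmod_morphism : zmod_morphism (@bdry V).
Proof. by move=> c d; rewrite !bdry_linext raddfB. Qed.

HB.instance Definition _ := GRing.isZmodMorphism.Build (chain V) (chain V) (@bdry V)
  bdry_is_zmod_morphism.

Lemma cobdryE (T : chain V) A : cobdry T A = cobd T A.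
Proof. by rewrite ffunE (cobdry_seqE T (std_uniq A)) sgn_std std_set mul1r. Qed.

Lemma bdry_simplex A : bdry (simplex A) = bd A.
Proof. by rewrite bdry_linext linext_simplex. Qed.

Lemma bd0 : bd (set0 : {set V}) = 0.
Proof. by rewrite /bd big_set0. Qed.

Lemma bdry_nsimplex A : bdry (nsimplex A) = bd A.
Proof. by rewrite bdry_linext linext_nsimplex; case: eqP => // ->; rewrite bd0. Qed.

Lemma bdry_cscale a c : bdry (cscale a c) = cscale a (bdry c).
Proof. by rewrite !bdry_linext linext_cscale. Qed.

Lemma bdry_linextF F c : bdry (linext F c) = linext (fun S => bdry (F S)) c.
Proof.
by rewrite {1}bdry_linext linext_comp; apply: linext_eq_in => S _; rewrite bdry_linext.
Qed.

Lemma linext_bdry F c : linext F (bdry c) = linext (fun S => linext F (bdry (simplex S))) c.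
Proof.
by rewrite bdry_linext linext_comp; apply: linext_eq_in => S _; rewrite bdry_simplex.
Qed.

Lemma supp_bd A : supp (fun t => [/\ t \subset A, #|t|.+1 = #|A| & t != set0]) (bd A).
Proof.
apply: supp_sum => x xA; apply: supp_cscale; apply: supp_nsimplex => Ax0.
by rewrite subD1set (cardsD1 x A) xA.
Qed.

Lemma nbelowS_D1 x y A : x \in A ->
  nbelowS y A = (nbelowS y (A :\ x) + (enum_rank x < enum_rank y))%N.
Proof.
move=> xA; rewrite /nbelowS (cardsD1 x) addnC inE xA; congr (_ + _)%N.
by apply: eq_card => z; rewrite !inE andbA.
Qed.

Lemma nbelowS_U1 w y A : w \notin A ->
  nbelowS y (w |: A) = (nbelowS y A + (enum_rank w < enum_rank y))%N.
Proof. by move=> wA; rewrite (nbelowS_D1 y (setU11 w A)) setU1K. Qed.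

Lemma nbelowS_D1_self x A : nbelowS x (A :\ x) = nbelowS x A.
Proof.
case: (boolP (x \in A)) => xA; first by rewrite (nbelowS_D1 x xA) ltnn addn0.
by congr nbelowS; apply/setDidPl; rewrite disjoint_sym disjoints1.
Qed.

(* Exactly one of [x], [y] is below the other. *)
Lemma signr_nbelowS_swap x y A : x \in A -> y \in A -> x != y ->
  (-1) ^+ (nbelowS x A + nbelowS y (A :\ x)) =
  - (-1) ^+ (nbelowS y A + nbelowS x (A :\ y)) :> rat.
Proof.
move=> xA yA xy; apply: signr_neq_odd.
rewrite (nbelowS_D1 y xA) (nbelowS_D1 x yA) (rank_ltNge xy) !oddD.
by case: (_ < _)%N; case: (odd (nbelowS y _)); case: (odd (nbelowS x _)).
Qed.

Lemma sum_antisym (h : V -> V -> rat) A :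
  (forall x y, x \in A -> y \in A -> x != y -> h y x = - h x y) ->
  \sum_(x in A) \sum_(y in A :\ x) h x y = 0.
Proof.
move=> H; set S := \sum_(x in A) _.
have HS : S = \sum_x \sum_y (if [&& x \in A, y \in A & y != x] then h x y else 0).
  rewrite /S big_mkcond; apply: eq_bigr => x _.
  case: (boolP (x \in A)) => xA /=; last by rewrite big1.
  by rewrite big_mkcond; apply: eq_bigr => y _; rewrite !inE andbC.
suff : S = - S by lra.
rewrite {1}HS exchange_big HS -sumrN; apply: eq_bigr => y _.
rewrite -sumrN; apply: eq_bigr => x _.
case: (boolP (x \in A)) => xA; case: (boolP (y \in A)) => yA /=; rewrite ?oppr0 //.
by case: (eqVneq x y) => [->|xy] /=; rewrite ?oppr0 // (H x y xA yA xy) opprK.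
Qed.

Lemma bdry_bd A : bdry (bd A) = 0.
Proof.
rewrite /bd raddf_sum /=; apply/ffunP => t; rewrite sum_ffunE ffunE.
rewrite (eq_bigr (fun x => \sum_(y in A :\ x)
  (-1) ^+ (nbelowS x A + nbelowS y (A :\ x)) * nsimplex (A :\ x :\ y) t)) => [|x _].
- apply: sum_antisym => x y xA yA xy.
  have -> : A :\ y :\ x = A :\ x :\ y by rewrite !setDDl setUC.
  by rewrite (signr_nbelowS_swap yA xA) 1?eq_sym // mulNr.
- rewrite bdry_cscale bdry_nsimplex cscaleE /bd sum_ffunE mulr_sumr.
  by apply: eq_bigr => y _; rewrite cscaleE mulrA -exprD.
Qed.

Lemma bdry_bdry c : bdry (bdry c) = 0.
Proof.
rewrite [bdry c]bdry_linext bdry_linextF.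
by under linext_eq_in do rewrite bdry_bd; rewrite linext_const raddf0.
Qed.

End Boundary.

Section Cone.
Variable V : finType.
Implicit Types (x w : V) (A t : {set V}) (c : chain V).

(* The simplex [w |: A] oriented with [w] first, so that its boundary is
   [A] minus the cone over the boundary of [A]. *)
Definition cone_simplex w A : chain V :=
  if w \in A then 0 else cscale ((-1) ^+ nbelowS w A) (simplex (w |: A)).

Definition cone w c : chain V := linext (cone_simplex w) c.

Definition cone_on A c : chain V := if [pick w in A] is Some w then cone w c else 0.

Lemma bdry_cone_simplex_notin w A : w \notin A -> A != set0 ->
  bdry (cone_simplex w A) = simplex A - \sum_(x in A)
      cscale ((-1) ^+ (nbelowS x A + nbelowS w (A :\ x))) (simplex (w |: (A :\ x))).
Proof.
move=> wA A0; rewrite /cone_simplex (negbTE wA) bdry_cscale bdry_simplex.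
apply/ffunP => t; rewrite cscaleE !ffunE /bd !sum_ffunE.
rewrite (bigD1 w) ?setU11 //= cscaleE setU1K // /nsimplex A0.
rewrite (nbelowS_U1 w wA) ltnn addn0 mulrDr mulrA -expr2 sqrr_sign mul1r.
congr (_ + _); first by rewrite ffunE.
rewrite mulr_sumr -sumrN (eq_bigl (mem A)) => [|x]; last first.
  by rewrite !inE; case: (eqVneq x w) => [->|]; rewrite ?(negbTE wA) ?andbT.
apply: eq_bigr => x xA.
have xw : x != w by apply: contraNneq wA => <-.
have -> : (w |: A) :\ x = w |: (A :\ x).
  by apply/setP => z; rewrite !inE; case: (eqVneq z w) => // ->; rewrite eq_sym xw.
have -> : w |: A :\ x != set0 by apply/set0Pn; exists w; rewrite setU11.
rewrite !cscaleE mulrA -exprD -mulNr; congr (_ * _); apply: signr_neq_odd.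
rewrite (nbelowS_U1 x wA) (nbelowS_D1 w xA) (rank_ltNge xw) !oddD.
by case: (_ < _)%N; case: (odd (nbelowS w _)); case: (odd (nbelowS x _)).
Qed.

Lemma bdry_cone_simplex w A : (1 < #|A|)%N ->
  bdry (cone_simplex w A) = simplex A - cone w (bd A).
Proof.
move=> hA; have A0 : A != set0 by rewrite -card_gt0 ltnW.
have -> : cone w (bd A) =
    \sum_(x in A) cscale ((-1) ^+ nbelowS x A) (cone_simplex w (A :\ x)).
  rewrite /cone /bd raddf_sum /=; apply: eq_bigr => x xA.
  by rewrite linext_cscale linext_nsimplex (setD1_neq0 xA hA).
case: (boolP (w \in A)) => wA; last first.
  rewrite (bdry_cone_simplex_notin wA A0); congr (_ - _); apply: eq_bigr => x xA.
  by rewrite /cone_simplex !inE (negbTE wA) andbF cscaleA -exprD.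
rewrite /cone_simplex wA raddf0 (bigD1 w) //= big1 => [|x /andP[xA xw]]; last first.
  by rewrite !inE eq_sym xw wA raddf0.
rewrite !inE eqxx /= setD1K // nbelowS_D1_self cscaleA -expr2 sqrr_sign cscale1r.
by rewrite addr0 subrr.
Qed.

Lemma bdry_cone_simplex_vertex w a :
  bdry (cone_simplex w [set a]) = simplex [set a] - simplex [set w].
Proof.
case: (eqVneq w a) => [->|wa]; first by rewrite /cone_simplex set11 raddf0 subrr.
have wA : w \notin [set a] by rewrite inE.
rewrite (bdry_cone_simplex_notin wA (set1_neq0 a)) big_set1.
rewrite -(nbelowS_D1_self a [set a]) setDv.
have nb0 y : nbelowS y (set0 : {set V}) = 0%N.
  by apply/eqP; rewrite cards_eq0; apply/eqP/setP => z; rewrite !inE.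
by rewrite !nb0 setU0 cscale1r.
Qed.

Lemma bdry_cone w c : supp (fun t => 1 < #|t|)%N c ->
  bdry (cone w c) = c - cone w (bdry c).
Proof.
move=> hc; rewrite /cone bdry_linextF.
rewrite (linext_eq_in (G := fun A => simplex A - cone w (bd A))); last first.
  by move=> A /hc hA; rewrite bdry_cone_simplex.
by rewrite linext_funB linext_id [bdry c]bdry_linext linext_comp.
Qed.

Lemma bdry_cone_vertices w c : supp (fun t => #|t| = 1%N) c ->
  bdry (cone w c) = c - cscale (\sum_t c t) (simplex [set w]).
Proof.
move=> hc; rewrite /cone bdry_linextF.
rewrite (linext_eq_in (G := fun A => simplex A - simplex [set w])); last first.
  by move=> A /hc /eqP /cards1P [a ->]; rewrite bdry_cone_simplex_vertex.
by rewrite linext_funB linext_id linext_const.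
Qed.

Lemma supp_cone w A k c : w \in A ->
  supp (fun t => t \subset A /\ #|t| = k) c ->
  supp (fun t => t \subset A /\ #|t| = k.+1) (cone w c).
Proof.
move=> wA hc; apply: supp_linext => B /hc [BA cB].
rewrite /cone_simplex; case: ifP => wB; first exact: supp0.
apply: supp_cscale; apply: supp_simplex; split; first by rewrite subUset sub1set wA.
by rewrite cardsU1 wB cB.
Qed.

Lemma cone_on_contract A k c : supp (fun t => t \subset A /\ #|t| = k.+1) c ->
  (if k is 0 then \sum_t c t = 0 else bdry c = 0) ->
  supp (fun t => t \subset A /\ #|t| = k.+2) (cone_on A c) /\ bdry (cone_on A c) = c.
Proof.
move=> hc hcyc; rewrite /cone_on; case: pickP => [w wA|A0].
  split; first exact: supp_cone.
  case: k hc hcyc => [|k] hc hcyc.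
    by rewrite bdry_cone_vertices ?hcyc ?cscale0r ?subr0 // => t /hc [].
  by rewrite bdry_cone ?hcyc /cone ?raddf0 ?addr0 // => t /hc [_ ->].
split; first exact: supp0.
rewrite raddf0; apply/esym/(supp_eq0 _ hc) => t [tA].
suff -> : t = set0 by rewrite cards0.
by apply/setP => z; rewrite inE; apply/negbTE/negP => /(subsetP tA); rewrite A0.
Qed.

End Cone.

Section DeleteSeq.
Variable V : finType.
Implicit Types (o : seq V) (i p : nat).

Lemma delete0 a o : delete 0 (a :: o) = o.
Proof. by rewrite /delete /= drop0. Qed.

Lemma deleteS i a o : delete i.+1 (a :: o) = a :: delete i o.
Proof. by []. Qed.

Lemma size_delete i o : (i < size o)%N -> size (delete i o) = (size o).-1.
Proof. by move=> hi; rewrite /delete size_cat size_take size_drop hi; lia. Qed.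

Lemma take_delete_le o i p : (i <= p)%N -> take p.+1 (delete i o) = delete i (take p.+2 o).
Proof.
elim: o i p => [|a o IH] i p hi //.
case: i hi => [|i] hi; first by rewrite delete0 /= delete0.
by case: p hi => [|p] // hi; rewrite deleteS /= deleteS IH.
Qed.

Lemma drop_delete_le o i p : (i <= p)%N -> drop p (delete i o) = drop p.+1 o.
Proof.
elim: o i p => [|a o IH] i p hi //.
case: i hi => [|i] hi; first by rewrite delete0.
by case: p hi => [|p] // hi; rewrite deleteS /= IH.
Qed.

Lemma take_delete_gt o i p : (p < i)%N -> take p.+1 (delete i o) = take p.+1 o.
Proof.
elim: o i p => [|a o IH] i p hi //.
case: i hi => [|i] // hi; rewrite deleteS /=.
by case: p hi => [|p] hi; rewrite ?take0 ?IH.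
Qed.

Lemma drop_delete_ge o i p : (p <= i)%N -> drop p (delete i o) = delete (i - p) (drop p o).
Proof.
elim: o i p => [|a o IH] i p hi //.
case: p hi => [|p] hi; first by rewrite !drop0 subn0.
by case: i hi => [|i] // hi; rewrite deleteS /= IH.
Qed.

Lemma delete_take_last o p : delete p.+1 (take p.+2 o) = take p.+1 o.
Proof.
elim: o p => [|a o IH] [|p] //=; rewrite deleteS ?IH //.
by case: o {IH} => [|b o] //=; rewrite delete0 take0.
Qed.

Lemma delete0_drop o p : delete 0 (drop p o) = drop p.+1 o.
Proof. by rewrite /delete take0 drop_drop add1n. Qed.

End DeleteSeq.

Section CapSeq.
Variables (V : finType) (T : chain V) (p : nat).
Hypothesis p_even : ~~ odd p.
Hypothesis ceval_size : forall u : seq V, size u != p.+1 -> ceval T u = 0.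
Implicit Types (o : seq V).

Definition cap_seq o : chain V := cscale (ceval T (take p.+1 o)) (osimp (drop p o)).

(* Since [p] is even, the last face of [v_0..v_(p+1)] carries the sign [-1]. *)
Lemma front_cocycle o :
  \sum_(i < p.+2) (-1) ^+ i * ceval T (delete i (take p.+2 o)) = 0 ->
  \sum_(i < p.+1) (-1) ^+ i * ceval T (delete i (take p.+2 o)) = ceval T (take p.+1 o).
Proof.
rewrite big_ord_recr /= delete_take_last => /eqP; rewrite addr_eq0 => /eqP ->.
by rewrite exprS -signr_odd (negbTE p_even) expr0 mulr1 mulN1r opprK.
Qed.

Lemma cap_seq_front o :
  \sum_(i < p.+2) (-1) ^+ i * ceval T (delete i (take p.+2 o)) = 0 ->
  \sum_(0 <= i < p.+1) cscale ((-1) ^+ i) (cap_seq (delete i o)) =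
  cscale (ceval T (take p.+1 o)) (osimp (drop p.+1 o)).
Proof.
move=> /front_cocycle <-; apply/ffunP => t.
rewrite sum_ffunE cscaleE big_mkord mulr_suml; apply: eq_bigr => i _.
have hi : (i <= p)%N by rewrite -ltnS.
by rewrite !cscaleE take_delete_le // drop_delete_le // mulrA.
Qed.

Lemma cap_seq_back o : (p < size o)%N ->
  \sum_(p.+1 <= i < size o) cscale ((-1) ^+ i) (cap_seq (delete i o)) =
  cscale (ceval T (take p.+1 o))
    (\sum_(1 <= j < size (drop p o)) cscale ((-1) ^+ j) (osimp (delete j (drop p o)))).
Proof.
move=> ho; rewrite raddf_sum /= size_drop -(add1n p) big_addn.
apply: eq_big_nat => j /andP[hj _].
have hjp : (p < j + p)%N by rewrite -[X in (X < _)%N]add0n ltn_add2r.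
rewrite /cap_seq take_delete_gt // drop_delete_ge ?leq_addl // addnK !cscaleA.
by rewrite exprD -(signr_odd _ p) (negbTE p_even) mulr1 mulrC.
Qed.

(* [d (T cap o) = T cap (d o)] on the oriented simplex [o]; the hypothesis is
   the cocycle condition on the front face [v_0..v_(p+1)]. *)
Lemma cap_seq_leibniz o :
  ((p.+2 <= size o)%N ->
     \sum_(i < p.+2) (-1) ^+ i * ceval T (delete i (take p.+2 o)) = 0) ->
  cscale (ceval T (take p.+1 o)) (bdry_seq (drop p o)) =
  \sum_(i < size o) cscale ((-1) ^+ i) (cap_seq (delete i o)).
Proof.
move=> Hcoc; case: (leqP (size o) p) => hn.
  rewrite ceval_size ?cscale0r ?big1 // => [i _|]; last first.
    by rewrite size_take; case: ltnP; lia.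
  rewrite /cap_seq ceval_size ?cscale0r ?raddf0 //.
  by rewrite size_take size_delete ?ltn_ord //; case: ltnP; lia.
have hd : (0 < size (drop p o))%N by rewrite size_drop subn_gt0.
rewrite /bdry_seq.
rewrite -(big_mkord xpredT (fun i => cscale ((-1) ^+ i) (osimp (delete i (drop p o))))).
rewrite big_ltn // raddfD /= -cap_seq_back //.
rewrite -(big_mkord xpredT (fun i => cscale ((-1) ^+ i) (cap_seq (delete i o)))).
rewrite [RHS](big_cat_nat _ (n := p.+1)) //=.
congr (_ + _); rewrite delete0_drop expr0 cscale1r.
case: (leqP p.+2 (size o)) => hn2; first by rewrite cap_seq_front ?Hcoc.
rewrite drop_oversize // /osimp /= raddf0 big_nat_cond big1 // => i /andP[/andP[_]].
rewrite ltnS => hi _.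
by rewrite /cap_seq drop_delete_le // drop_oversize // /osimp /= !raddf0.
Qed.

End CapSeq.

Section CapProduct.
Variables (V : finType) (K : {set {set V}}) (O : rel V) (p : nat) (T : chain V).
Hypothesis K_complex : is_complex K.
Hypothesis O_ordering : is_ordering K O.
Implicit Types (u : seq V) (S t : {set V}) (c : chain V).

Definition osort S : seq V := sort O (enum S).

Definition cap_simplex S : chain V := cscale (sgn (osort S)) (cap_seq T p (osort S)).

Lemma capO_linext c : capO O p T c = linext cap_simplex c.
Proof.
apply/ffunP => t; rewrite linextE sum_ffunE; apply: eq_bigr => S _.
by rewrite !cscaleE !mulrA.
Qed.

Lemma face_in_complex S t : S \in K -> t \subset S -> t != set0 -> t \in K.
Proof. by case: K_complex => _; apply. Qed.

Lemma mem_vert S x : S \in K -> x \in S -> x \in vert K.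
Proof. by move=> SK xS; rewrite inE (face_in_complex SK) ?sub1set ?set1_neq0. Qed.

Lemma ordering_trans : {in [pred x | x \in vert K] & &, transitive O}.
Proof. by case: O_ordering => _ _ Otr _ y x z hy hx hz; apply: Otr. Qed.

Lemma osort_uniq S : uniq (osort S).
Proof. by rewrite sort_uniq enum_uniq. Qed.

Lemma mem_osort S : osort S =i S.
Proof. by move=> y; rewrite mem_sort mem_enum. Qed.

Lemma osort_set S : [set y in osort S] = S.
Proof. by apply/setP => y; rewrite inE mem_osort. Qed.

Lemma all_vert_osort S : S \in K -> all [pred x | x \in vert K] (osort S).
Proof. by move=> SK; apply/allP => y; rewrite mem_osort => /(mem_vert SK). Qed.

Lemma osort_pairwise S : S \in K -> pairwise O (osort S).
Proof.
move=> SK; rewrite -(sorted_pairwise_in ordering_trans (all_vert_osort SK)).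
apply: (sort_sorted_in (P := [pred x | x \in S])); last by apply/allP => y; rewrite mem_enum.
by case: O_ordering => _ _ _ Otot x y; apply: Otot.
Qed.

Lemma osort_eq u : uniq u -> pairwise O u -> [set y in u] \in K -> osort [set y in u] = u.
Proof.
move=> uu pu uK; have mem_u y : y \in osort [set y in u] -> y \in vert K.
  by rewrite mem_osort => /(mem_vert uK).
apply: (@sorted_eq_in _ O).
- by move=> y x z hy hx hz; apply: ordering_trans; rewrite /= mem_u.
- by move=> x y hx hy /andP[]; case: O_ordering => _ Oanti _ _; apply: Oanti; apply: mem_u.
- by rewrite (sorted_pairwise_in ordering_trans (all_vert_osort uK)) osort_pairwise.
- rewrite (sorted_pairwise_in ordering_trans) //.
  by apply/allP => y yu /=; apply: (mem_vert uK); rewrite inE.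
- by apply: uniq_perm => //; [exact: osort_uniq | move=> y; rewrite mem_osort inE].
Qed.

Lemma face_of_osort S u : S \in K -> {subset u <= osort S} -> u != [::] ->
  [set y in u] \in K.
Proof.
move=> SK uS u0; apply: (face_in_complex SK).
  by apply/subsetP => y; rewrite inE => /uS; rewrite mem_osort.
by case: u u0 {uS} => // x u _; apply: set_seq_cons_neq0.
Qed.

Lemma linext_cap_osimp u : uniq u -> pairwise O u -> (u != [::] -> [set y in u] \in K) ->
  linext cap_simplex (osimp u) = cap_seq T p u.
Proof.
move=> uu pu uK; rewrite (osimpE uu) linext_cscale linext_nsimplex.
case: u uu pu uK => [|x u'] uu pu uK.
  by rewrite set_seq_nil eqxx raddf0 /cap_seq /= /osimp /= raddf0.
by rewrite set_seq_cons_neq0 /cap_simplex osort_eq ?uK // cscaleA -expr2 sqrr_sign cscale1r.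
Qed.

Lemma simplex_osort S : S != set0 -> simplex S = cscale (sgn (osort S)) (osimp (osort S)).
Proof.
move=> S0; rewrite (osimpE (osort_uniq S)) osort_set /nsimplex S0.
by rewrite cscaleA -expr2 sqrr_sign cscale1r.
Qed.

Lemma bdry_osimp u : uniq u -> bdry (osimp u) = bdry_seq u.
Proof. by move=> uu; rewrite (osimpE uu) bdry_cscale bdry_nsimplex (bdry_seqE uu). Qed.

Hypothesis p_even : ~~ odd p.
Hypothesis T_size : forall B : {set V}, T B != 0 -> #|B| = p.+1.
Hypothesis T_cocycle : cocycle K T.

Lemma ceval_size u : size u != p.+1 -> ceval T u = 0.
Proof.
rewrite /ceval; case: ifP => // uu hu.
case: (eqVneq (T [set y in u]) 0) => [->|/T_size]; first by rewrite mulr0.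
by rewrite cardsE (card_uniqP uu) => su; rewrite su eqxx in hu.
Qed.

Lemma bdry_cap_simplex S : S \in K -> bdry (cap_simplex S) = capO O p T (bdry (simplex S)).
Proof.
move=> SK; have S0 : S != set0 by case: K_complex => ->.
set o := osort S; have uo : uniq o := osort_uniq S.
rewrite capO_linext (simplex_osort S0) -/o bdry_cscale linext_cscale (bdry_osimp uo).
rewrite [cap_simplex S]/cap_simplex -/o bdry_cscale; congr (cscale _ _).
rewrite [cap_seq _ _ o]/cap_seq bdry_cscale (bdry_osimp (drop_uniq p uo)).
rewrite (cap_seq_leibniz p_even ceval_size) => [|hn]; last first.
  have hs : size (take p.+2 o) = p.+2 by rewrite size_take; case: ltnP; lia.
  have := cobdry_seqE T (take_uniq p.+2 uo); rewrite hs => ->.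
  rewrite -cobdryE T_cocycle ?mulr0 // (face_of_osort SK) => [//|y /mem_take //|].
  by rewrite -size_eq0 hs.
rewrite /bdry_seq raddf_sum /=; apply: eq_bigr => i _.
rewrite linext_cscale linext_cap_osimp ?delete_uniq //.
  exact: subseq_pairwise (delete_subseq i o) (osort_pairwise SK).
by apply: (face_of_osort SK); apply: mem_subseq (delete_subseq i o).
Qed.

Lemma bdry_capO c : (forall S, c S != 0 -> S \in K) ->
  bdry (capO O p T c) = capO O p T (bdry c).
Proof.
move=> cK; rewrite !capO_linext bdry_linextF linext_bdry.
by apply: linext_eq_in => S /cK SK; rewrite bdry_cap_simplex // capO_linext.
Qed.

End CapProduct.

Section CapSupport.
Variables (V : finType) (K L : {set {set V}}) (O : rel V) (p : nat) (T : chain V).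
Hypothesis K_complex : is_complex K.
Hypothesis O_ordering : is_ordering K O.
Hypothesis O_good : forall v w, v \in vert L -> w \in vert K -> O v w -> w \in vert L.
Hypothesis T_rel : rel_cochain K (far_part K L) p T.
Implicit Types (o : seq V) (S t : {set V}).

(* Every vertex of the back face [v_p..v_k] lies above [v_p], hence above
   every vertex of the front face [v_0..v_p]. *)
Lemma back_face_in_L o v y : pairwise O o -> v \in take p.+1 o -> v \in vert L ->
  y \in drop p o -> y \in vert K -> y \in vert L.
Proof.
move=> po hv vL hy yK.
move: po; rewrite -(cat_take_drop p o) pairwise_cat => /and3P[hall _ pd].
move: hv; rewrite -addn1 takeD mem_cat => /orP[hv|hv].
  by apply: (O_good vL yK); move/allrelP: hall; apply.
move: hy pd hv; case: (drop p o) => [|a r] //; rewrite inE /= take0 inE => /orP[/eqP ->|hy].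
  by move=> _ /eqP <-.
by move=> /andP[ha _] /eqP Hv; subst v; apply: (O_good vL yK); move/allP: ha; apply.
Qed.

Lemma rel_cochain_card B : T B != 0 -> #|B| = p.+1.
Proof. by move/T_rel => []. Qed.

Lemma size_osort S : size (osort O S) = #|S|.
Proof. by rewrite size_sort cardE. Qed.

Lemma supp_cap_simplex S : S \in K ->
  supp (fun t => [/\ t \subset S :&: vert L, (#|t| + p)%N = #|S| & t != set0])
    (cap_simplex O p T S).
Proof.
move=> SK; rewrite /cap_simplex /cap_seq; set o := osort O S.
have uo : uniq o := osort_uniq O S.
have po : pairwise O o := osort_pairwise K_complex O_ordering SK.
case: (eqVneq (ceval T (take p.+1 o)) 0) => [->|hne].
  by rewrite cscale0r raddf0; apply: supp0.
do 2 apply: supp_cscale; rewrite (osimpE (drop_uniq p uo)); apply: supp_cscale.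
apply: supp_nsimplex => hne0.
move: hne; rewrite /ceval take_uniq // mulf_eq0 negb_or => /andP[_ /T_rel [BK _ BW]].
have : ~~ [disjoint [set y in take p.+1 o] & vert L] by move: BW; rewrite inE BK.
rewrite -setI_eq0 => /set0Pn [v]; rewrite in_setI inE => /andP[vt vL].
split => //.
  apply/subsetP => y; rewrite inE => yd.
  have yS : y \in S by rewrite -(mem_osort O) (mem_drop yd).
  rewrite in_setI yS (back_face_in_L po vt vL yd) //; exact: mem_vert SK yS.
rewrite cardsE (card_uniqP (drop_uniq p uo)) size_drop size_osort.
have : (0 < size (drop p o))%N by case: (drop p o) hne0; rewrite ?set_seq_nil ?eqxx.
by rewrite size_drop size_osort; lia.
Qed.

Lemma sum_cap_simplex S : #|S| = p.+1 -> \sum_t cap_simplex O p T S t = T S.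
Proof.
move=> hS; rewrite /cap_simplex /cap_seq; set o := osort O S.
have uo : uniq o := osort_uniq O S.
have so : size o = p.+1 by rewrite size_osort.
rewrite take_oversize ?so // (cevalE _ uo) osort_set.
have : size (drop p o) = 1%N by rewrite size_drop so subSnn.
case: (drop p o) => [|a [|b r]] // _.
rewrite osimpE // (_ : [set y in [:: a]] = [set a]); last first.
  by apply/setP => z; rewrite !inE.
have -> : sgn [:: a] = 1 by rewrite /sgn /= expr0.
rewrite cscale1r /nsimplex set1_neq0; under eq_bigr do rewrite !cscaleE.
by rewrite -mulr_sumr -mulr_sumr sum_simplex mulr1 mulrA -expr2 sqrr_sign mul1r.
Qed.

End CapSupport.

Section Homotopy.
Variables (V : finType) (K L : {set {set V}}) (O1 O2 : rel V) (p : nat) (T : chain V).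
Hypothesis K_complex : is_complex K.
Hypothesis O1_good : good_ordering K L O1.
Hypothesis O2_good : good_ordering K L O2.
Hypothesis p_even : ~~ odd p.
Hypothesis T_rel : rel_cochain K (far_part K L) p T.
Hypothesis T_cocycle : cocycle K T.
Implicit Types (S t : {set V}) (c : chain V).

Definition cap_diff S : chain V := cap_simplex O1 p T S - cap_simplex O2 p T S.

(* The chain homotopy [d h + h d = T cap^O1 - T cap^O2] built by the acyclic
   carrier method: on a simplex [S], [h] is the cone from a vertex of the
   simplex [S :&: vert L] over the defect [cap_diff S - h (d S)]. *)
Fixpoint htpy n c : chain V :=
  linext (fun S => cone_on (S :&: vert L)
    (cap_diff S - if n is n'.+1 then htpy n' (bdry (simplex S)) else 0)) c.

Definition htpy_prev n S : chain V := if n is n'.+1 then htpy n' (bdry (simplex S)) else 0.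

Lemma htpy_simplex n S :
  htpy n (simplex S) = cone_on (S :&: vert L) (cap_diff S - htpy_prev n S).
Proof. by case: n => [|n] /=; rewrite linext_simplex. Qed.

Lemma htpyE n c : htpy n c = linext (fun S => htpy n (simplex S)) c.
Proof. by case: n => [|n]; apply: linext_simplexE. Qed.

Lemma linext_htpy_prev n c :
  linext (htpy_prev n) c = if n is n'.+1 then htpy n' (bdry c) else 0.
Proof.
case: n => [|n]; first by rewrite linext_const raddf0.
by rewrite [in RHS]htpyE linext_bdry; apply: linext_eq_in => S _; rewrite -htpyE.
Qed.

Lemma supp_cap_diff S : S \in K ->
  supp (fun t => [/\ t \subset S :&: vert L, (#|t| + p)%N = #|S| & t != set0]) (cap_diff S).
Proof.
case: O1_good O2_good => [O1_ord O1_up] [O2_ord O2_up] SK.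
by apply: supp_sub; [exact: (supp_cap_simplex K_complex O1_ord O1_up T_rel SK)|
  exact: (supp_cap_simplex K_complex O2_ord O2_up T_rel SK)].
Qed.

Lemma sum_cap_diff S : #|S| = p.+1 -> \sum_t cap_diff S t = 0.
Proof.
have sumB (c d : chain V) : \sum_t (c - d) t = \sum_t c t - \sum_t d t.
  by rewrite -sumrB; apply: eq_bigr => t _; rewrite !ffunE.
by move=> hS; rewrite sumB !sum_cap_simplex // subrr.
Qed.

Lemma bdry_cap_diff S : S \in K -> bdry (cap_diff S) = linext cap_diff (bd S).
Proof.
case: O1_good O2_good => [O1_ord _] [O2_ord _] SK.
rewrite raddfB /= !(bdry_cap_simplex _ _ p_even (rel_cochain_card T_rel) T_cocycle) //.
by rewrite !capO_linext bdry_simplex -linext_funB.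
Qed.

Definition htpy_spec n S :=
  supp (fun t => t \subset S :&: vert L /\ #|t| = n.+2) (htpy n (simplex S)) /\
  bdry (htpy n (simplex S)) + htpy_prev n S = cap_diff S.

Lemma htpy_spec_cone n S : S \in K -> #|S| = (p + n).+1 ->
  supp (fun t => t \subset S :&: vert L /\ #|t| = n.+1) (htpy_prev n S) ->
  (if n is 0 then \sum_t (cap_diff S - htpy_prev n S) t = 0
   else bdry (cap_diff S - htpy_prev n S) = 0) ->
  htpy_spec n S.
Proof.
move=> SK hS prev_supp hcyc; rewrite /htpy_spec htpy_simplex.
have x_supp : supp (fun t => t \subset S :&: vert L /\ #|t| = n.+1)
    (cap_diff S - htpy_prev n S).
  apply: supp_sub => //; apply: supp_impl (supp_cap_diff SK) => t [tS ht _].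
  by split => //; lia.
by have [? ->] := cone_on_contract x_supp hcyc; rewrite subrK.
Qed.

Section Step.
Variables (n : nat) (S : {set V}).
Hypothesis SK : S \in K.
Hypothesis S_card : #|S| = (p + n.+1).+1.
Hypothesis IH : forall t, t \in K -> #|t| = (p + n).+1 -> htpy_spec n t.

Let IH_faces t : bd S t != 0 -> htpy_spec n t.
Proof.
move=> /supp_bd [tS ht t0]; apply: IH; first exact: face_in_complex SK tS t0.
by apply: succn_inj; rewrite ht S_card addnS.
Qed.

Lemma htpy_prev_supp :
  supp (fun t => t \subset S :&: vert L /\ #|t| = n.+2) (htpy_prev n.+1 S).
Proof.
rewrite /htpy_prev bdry_simplex htpyE; apply: supp_linext => t /[dup] /supp_bd [tS _ _].
move=> /IH_faces [t_supp _]; apply: supp_impl t_supp => t' [t'S ->]; split => //.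
by apply: subset_trans t'S _; apply: setSI.
Qed.

Lemma htpy_prev_cycle : bdry (cap_diff S - htpy_prev n.+1 S) = 0.
Proof.
rewrite raddfB /= (bdry_cap_diff SK) /htpy_prev bdry_simplex htpyE bdry_linextF.
rewrite (@linext_eq_in _ (fun t => bdry (htpy n (simplex t)))
                       (fun t => cap_diff t - htpy_prev n t)); last first.
  by move=> t /IH_faces [_ <-]; rewrite addrK.
rewrite linext_funB -bdry_simplex linext_htpy_prev.
by case: n => [|m]; rewrite ?bdry_bdry ?(htpyE m 0) ?raddf0 ?subr0 ?addr0;
  apply/eqP; rewrite subr_eq0.
Qed.

End Step.

Lemma htpy_specP n S : S \in K -> #|S| = (p + n).+1 -> htpy_spec n S.
Proof.
elim: n S => [|n IH] S SK hS.
  by apply: htpy_spec_cone => //; [exact: supp0 | rewrite subr0 sum_cap_diff // hS addn0].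
apply: htpy_spec_cone => //; [exact: htpy_prev_supp | exact: htpy_prev_cycle].
Qed.

Lemma capO_diff_homotopy q c : chain_in K (p + q) c ->
  capO O1 p T c - capO O2 p T c =
  bdry (htpy q c) + (if q is q'.+1 then htpy q' (bdry c) else 0).
Proof.
move=> hc; rewrite !capO_linext -linext_funB -/cap_diff -linext_htpy_prev htpyE bdry_linextF.
rewrite -linext_funD; apply: linext_eq_in => S /hc [SK hS].
by have [_ ->] := htpy_specP SK hS.
Qed.

Lemma supp_htpy n c : chain_in K (p + n) c ->
  supp (fun t => exists2 S, c S != 0 & t \subset S :&: vert L /\ #|t| = n.+2) (htpy n c).
Proof.
move=> hc; rewrite htpyE; apply: supp_linext => S /[dup] cS /hc [SK hS].
have [Hs _] := htpy_specP SK hS; apply: supp_impl Hs => t ht; by exists S.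
Qed.

End Homotopy.

Section CapHomology.
Variables (V : finType) (K L Ks : {set {set V}}) (p : nat) (T : chain V).
Hypothesis K_complex : is_complex K.
Hypothesis L_full : is_full L K.
Hypothesis Ks_sub : is_subcomplex Ks K.
Hypothesis p_even : ~~ odd p.
Hypothesis T_rel : rel_cochain K (far_part K L) p T.
Hypothesis T_cocycle : cocycle K T.
Implicit Types (M : {set {set V}}) (S t : {set V}) (O : rel V) (c : chain V).

Lemma chain_in_sub M n c : is_subcomplex M K -> chain_in M n c -> chain_in K n c.
Proof. by case=> _ /subsetP MK hc S /hc [/MK]. Qed.

Lemma chain_in_L n c : chain_in (K :&: L) n c -> chain_in L n c.
Proof. by move=> hc S /hc [/setIP[]]. Qed.

Lemma face_in_full M S t : is_subcomplex M K -> S \in M ->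
  t \subset S :&: vert L -> t != set0 -> t \in M :&: L.
Proof.
case=> [[_ M_faces] /subsetP MK] SM; rewrite subsetI => /andP[tS tL] t0.
by rewrite inE (M_faces S) // L_full // (face_in_complex K_complex (MK S SM)).
Qed.

Lemma capO_chain_in O M k c : good_ordering K L O -> is_subcomplex M K ->
  chain_in M (p + k) c -> chain_in (M :&: L) k (capO O p T c).
Proof.
case=> O_ord O_up M_sub hc; rewrite capO_linext; apply: supp_linext => S /hc [SM hS].
have SK : S \in K by case: M_sub => _ /subsetP; apply.
apply: supp_impl (supp_cap_simplex K_complex O_ord O_up T_rel SK) => t [tS ht t0].
by split; [exact: face_in_full M_sub SM tS t0 | lia].
Qed.

Lemma capO_small O n c : good_ordering K L O -> chain_in K n c -> (n < p)%N ->
  capO O p T c = 0.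
Proof.
case=> O_ord O_up hc hn; apply: (@supp_eq0 _ (fun=> False)) => [t []|].
rewrite capO_linext; apply: supp_linext => S /hc [SK hS].
apply: supp_impl (supp_cap_simplex K_complex O_ord O_up T_rel SK) => t [_ ht].
by rewrite -card_gt0; lia.
Qed.

Lemma capO_rel_cycle O q c : (0 < p)%N -> good_ordering K L O ->
  rel_cycle K Ks (p + q) c -> rel_cycle L (Ks :&: L) q (capO O p T c).
Proof.
move=> p_gt0 O_good [hc hbc]; have [O_ord _] := O_good; split.
  exact/chain_in_L/capO_chain_in.
rewrite (bdry_capO K_complex O_ord p_even (rel_cochain_card T_rel) T_cocycle) => [|S /hc []//].
case: q hc hbc => [|q] hc hbc.
  by rewrite (capO_small O_good (chain_in_sub Ks_sub hbc)) ?addn0 ?prednK //; apply: supp0.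
by apply: capO_chain_in => //; move: hbc; rewrite addnS.
Qed.

Lemma capO_rel_bdry O q c : good_ordering K L O ->
  rel_bdry K Ks (p + q) c -> rel_bdry L (Ks :&: L) q (capO O p T c).
Proof.
move=> O_good [d [e [hd he ->]]]; have [O_ord _] := O_good.
exists (capO O p T d), (capO O p T e); split.
- by apply/chain_in_L/capO_chain_in => //; rewrite addnS.
- exact: capO_chain_in.
- rewrite capO_linext raddfD /= -!capO_linext.
  by rewrite (bdry_capO K_complex O_ord p_even (rel_cochain_card T_rel) T_cocycle) // => S /hd [].
Qed.

Lemma htpy_chain_in O1 O2 M n c : good_ordering K L O1 -> good_ordering K L O2 ->
  is_subcomplex M K -> chain_in M (p + n) c -> chain_in (M :&: L) n.+1 (htpy L O1 O2 p T n c).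
Proof.
move=> O1_good O2_good M_sub hc.
have := supp_htpy K_complex O1_good O2_good p_even T_rel T_cocycle (chain_in_sub M_sub hc).
apply: supp_impl => t [S /hc [SM _] [tS ht]]; split => //.
by apply: face_in_full M_sub SM tS _; rewrite -card_gt0 ht.
Qed.

Lemma capO_diff_rel_bdry O1 O2 q c : good_ordering K L O1 -> good_ordering K L O2 ->
  rel_cycle K Ks (p + q) c -> rel_bdry L (Ks :&: L) q (capO O1 p T c - capO O2 p T c).
Proof.
move=> O1_good O2_good [hc hbc].
rewrite (capO_diff_homotopy K_complex O1_good O2_good p_even T_rel T_cocycle hc).
eexists; eexists; split; last by [].
  by apply/chain_in_L/htpy_chain_in.
case: q hc hbc => [|q] hc hbc; first exact: supp0.
by apply: htpy_chain_in => //; move: hbc; rewrite addnS.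
Qed.

End CapHomology.

Theorem propositionB2 (V : finType) (K L Ks : {set {set V}}) (p q : nat)
    (T : chain V) :
  is_complex K -> is_subcomplex L K -> is_full L K -> is_subcomplex Ks K ->
  (0 < p)%N -> ~~ odd p ->
  rel_cochain K (far_part K L) p T -> cocycle K T ->
  (forall O : rel V, good_ordering K L O ->
     (forall c, rel_cycle K Ks (p + q) c ->
        rel_cycle L (Ks :&: L) q (capO O p T c)) /\
     (forall c, rel_bdry K Ks (p + q) c ->
        rel_bdry L (Ks :&: L) q (capO O p T c))) /\
  (forall O1 O2 : rel V, good_ordering K L O1 -> good_ordering K L O2 ->
     forall c, rel_cycle K Ks (p + q) c ->
       rel_bdry L (Ks :&: L) q (capO O1 p T c - capO O2 p T c)).
Proof.
move=> K_complex _ L_full Ks_sub p_gt0 p_even T_rel T_cocycle; split.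
  by move=> O O_good; split=> c; [apply: capO_rel_cycle | apply: capO_rel_bdry].
by move=> O1 O2 O1_good O2_good c; apply: capO_diff_rel_bdry.
Qed.
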